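(* Let $T\in B(H)$ satisfy $(T-t_N)^{k_N}(T-t_{N-1})^{k_{N-1}}\cdots(T-t_1)^{k_1}=0$, where $t_1,\ldots,t_N\in\mathbb C$ are pairwise distinct and $k_1,\ldots,k_N$ are positive integers. For $0\le m\le N$ let $R_m=\ker\big((T-t_m)^{k_m}\cdots(T-t_1)^{k_1}\big)$ (with $R_0=\{0\}$, so $R_N=H$), and for $1\le m\le N$ let $L_m=R_m\ominus R_{m-1}$. Then for every $m$, the orthogonal projection onto $L_m$ belongs to $C^*(T,1)$, the unital $C^*$-algebra generated by $T$. *)

From Stdlib Require Import Reals.
Open Scope R_scope.

Record Cx := mkC { Re : R; Im : R }.
Definition C0 : Cx := mkC 0 0.
Definition C1 : Cx := mkC 1 0.
Definition Cadd (a b : Cx) : Cx := mkC (Re a + Re b) (Im a + Im b).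
Definition Copp (a : Cx) : Cx := mkC (- Re a) (- Im a).
Definition Cmul (a b : Cx) : Cx :=
  mkC (Re a * Re b - Im a * Im b) (Re a * Im b + Im a * Re b).
Definition Cconj (a : Cx) : Cx := mkC (Re a) (- Im a).

Record HilbertSpace := {
  V :> Type;
  vzero : V;
  vadd : V -> V -> V;
  vopp : V -> V;
  vscal : Cx -> V -> V;
  inner : V -> V -> Cx;   (* linear in the first argument *)
  vadd_assoc : forall x y z, vadd x (vadd y z) = vadd (vadd x y) z;
  vadd_comm : forall x y, vadd x y = vadd y x;
  vadd_0 : forall x, vadd x vzero = x;
  vadd_opp : forall x, vadd x (vopp x) = vzero;
  vscal_1 : forall x, vscal C1 x = x;
  vscal_mul : forall a b x, vscal a (vscal b x) = vscal (Cmul a b) x;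
  vscal_addv : forall a x y, vscal a (vadd x y) = vadd (vscal a x) (vscal a y);
  vscal_addC : forall a b x, vscal (Cadd a b) x = vadd (vscal a x) (vscal b x);
  inner_add_l : forall x y z, inner (vadd x y) z = Cadd (inner x z) (inner y z);
  inner_scal_l : forall a x y, inner (vscal a x) y = Cmul a (inner x y);
  inner_conj : forall x y, inner y x = Cconj (inner x y);
  inner_pos : forall x, 0 <= Re (inner x x);
  inner_def : forall x, Re (inner x x) = 0 -> x = vzero;
  complete : forall u : nat -> V,
    (forall eps, eps > 0 -> exists N, forall p q, (N <= p)%nat -> (N <= q)%nat ->
        sqrt (Re (inner (vadd (u p) (vopp (u q))) (vadd (u p) (vopp (u q))))) < eps) ->
    exists l, forall eps, eps > 0 -> exists N, forall p, (N <= p)%nat ->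
        sqrt (Re (inner (vadd (u p) (vopp l)) (vadd (u p) (vopp l)))) < eps
}.

Arguments vzero {h}.
Arguments vadd {h}.
Arguments vopp {h}.
Arguments vscal {h}.
Arguments inner {h}.

Section Ops.
Variable H : HilbertSpace.

Definition vsub (x y : H) : H := vadd x (vopp y).
Definition vnorm (x : H) : R := sqrt (Re (inner x x)).

Definition op := H -> H.
Definition op_id : op := fun x => x.
Definition op_comp (A B : op) : op := fun x => A (B x).
Definition op_add (A B : op) : op := fun x => vadd (A x) (B x).
Definition op_scal (c : Cx) (A : op) : op := fun x => vscal c (A x).
Definition op_sub (A B : op) : op := fun x => vsub (A x) (B x).

Definition is_linear (A : op) : Prop :=
  (forall x y, A (vadd x y) = vadd (A x) (A y)) /\
  (forall c x, A (vscal c x) = vscal c (A x)).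

Definition bounded_op (A : op) : Prop :=
  is_linear A /\ exists M, forall x, vnorm (A x) <= M * vnorm x.

Definition is_adjoint (A Astar : op) : Prop :=
  forall x y, inner (A x) y = inner x (Astar y).

Definition op_norm_le (A : op) (eps : R) : Prop :=
  forall x, vnorm (A x) <= eps * vnorm x.

(* C*(T,1): the smallest norm-closed subalgebra of B(H) containing 1, T, T*;
   it is automatically closed under the adjoint. *)
Inductive in_Cstar (T Tstar : op) : op -> Prop :=
  | cs_id : in_Cstar T Tstar op_id
  | cs_T : in_Cstar T Tstar T
  | cs_Tstar : in_Cstar T Tstar Tstar
  | cs_add : forall A B, in_Cstar T Tstar A -> in_Cstar T Tstar B ->
      in_Cstar T Tstar (op_add A B)
  | cs_scal : forall c A, in_Cstar T Tstar A -> in_Cstar T Tstar (op_scal c A)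
  | cs_comp : forall A B, in_Cstar T Tstar A -> in_Cstar T Tstar B ->
      in_Cstar T Tstar (op_comp A B)
  | cs_lim : forall A, (forall eps, eps > 0 ->
        exists B, in_Cstar T Tstar B /\ op_norm_le (op_sub A B) eps) ->
      in_Cstar T Tstar A.

Definition is_orth_proj (M : H -> Prop) (P : op) : Prop :=
  forall x, M (P x) /\ forall y, M y -> inner (vsub x (P x)) y = C0.

Definition shift_pow (T : op) (t : Cx) (k : nat) : op :=
  Nat.iter k (op_comp (fun x => vsub (T x) (vscal t x))) op_id.

Fixpoint Qprod (T : op) (t : nat -> Cx) (k : nat -> nat) (m : nat) : op :=
  match m with
  | O => op_id
  | S m' => op_comp (shift_pow T (t m) (k m)) (Qprod T t k m')
  end.

Definition Rsp (T : op) (t : nat -> Cx) (k : nat -> nat) (m : nat) (x : H) : Prop :=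
  Qprod T t k m x = vzero.

Definition Lsp (T : op) (t : nat -> Cx) (k : nat -> nat) (m : nat) (x : H) : Prop :=
  Rsp T t k m x /\ forall y, Rsp T t k (m - 1) y -> inner x y = C0.

End Ops.

(* Write Q_m = (T - t_m)^(k_m) ... (T - t_1)^(k_1), so R_m = ker Q_m.
   1. Since the t_i are distinct, Q_m is coprime to the remaining factor Q' of
      Q_N = Q' Q_m: there are polynomials U, W in T with U Q_m + W Q' = 1.
      Then F = W Q' is an idempotent polynomial in T whose range is R_m.
   2. For any idempotent F such that F and its adjoint F' lie in C*(T,1), the
      orthogonal projection onto ran F is F F' S^-1 with the positive operator
      S = F F' + (1 - F')(1 - F).  S is coercive, so 1 - kappa S is a strict
      contraction for small kappa > 0 and S^-1 is a norm limit of Neumann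
      partial sums, hence in C*(T,1); completeness of H gives the limit.
   3. The projection onto L_m is the difference of the projections onto R_m
      and R_(m-1). *)

From Stdlib Require Import Reals Lra Lia Psatz FunctionalExtensionality IndefiniteDescription.
Open Scope R_scope.

Lemma Cx_eq a b : Re a = Re b -> Im a = Im b -> a = b.
Proof. destruct a, b; simpl; intros; subst; auto. Qed.

Definition Csub (a b : Cx) : Cx := Cadd a (Copp b).

Lemma Cx_ring_theory : ring_theory C0 C1 Cadd Cmul Csub Copp (@eq Cx).
Proof. constructor; intros; apply Cx_eq; unfold Csub; simpl; ring. Qed.
Add Ring Cx_ring : Cx_ring_theory.

Lemma Cconj_add a b : Cconj (Cadd a b) = Cadd (Cconj a) (Cconj b).
Proof. apply Cx_eq; simpl; ring. Qed.
Lemma Cconj_mul a b : Cconj (Cmul a b) = Cmul (Cconj a) (Cconj b).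
Proof. apply Cx_eq; simpl; ring. Qed.
Lemma Cconj_invol a : Cconj (Cconj a) = a.
Proof. apply Cx_eq; simpl; ring. Qed.

Definition mone : Cx := Copp C1.
Definition rc (r : R) : Cx := mkC r 0.

Lemma Cconj_mone : Cconj mone = mone.
Proof. apply Cx_eq; simpl; ring. Qed.
Lemma Cconj_rc r : Cconj (rc r) = rc r.
Proof. apply Cx_eq; simpl; ring. Qed.

Definition Cinv (a : Cx) : Cx :=
  mkC (Re a / (Re a * Re a + Im a * Im a)) (- Im a / (Re a * Re a + Im a * Im a)).

Lemma Cinv_l a : a <> C0 -> Cmul (Cinv a) a = C1.
Proof.
  intro Ha. assert (Hn : Re a * Re a + Im a * Im a <> 0).
  { intro E. apply Ha. apply Cx_eq; simpl; nra. }
  apply Cx_eq; unfold Cinv, Cmul; simpl; field; auto.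
Qed.

Lemma Csub_neq0 a b : a <> b -> Csub a b <> C0.
Proof.
  intros Hab E. apply Hab. apply Cx_eq.
  - apply (f_equal Re) in E; simpl in E; lra.
  - apply (f_equal Im) in E; simpl in E; lra.
Qed.

Definition Cabs (c : Cx) : R := sqrt (Re c * Re c + Im c * Im c).

Lemma Cabs_ge0 c : 0 <= Cabs c.
Proof. apply sqrt_pos. Qed.
Lemma Cabs_mone : Cabs mone = 1.
Proof. unfold Cabs; simpl. transitivity (sqrt 1); [f_equal; ring | apply sqrt_1]. Qed.

Section Vectors.
Variable H : HilbertSpace.
Implicit Types x y z u v : H.

Lemma vadd_0_l x : vadd vzero x = x.
Proof. rewrite vadd_comm; apply vadd_0. Qed.
Lemma vadd_opp_l x : vadd (vopp x) x = vzero.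
Proof. rewrite vadd_comm; apply vadd_opp. Qed.
Lemma vadd_cancel_l u x y : vadd u x = vadd u y -> x = y.
Proof.
  intro E. apply (f_equal (vadd (vopp u))) in E.
  now rewrite !vadd_assoc, vadd_opp_l, !vadd_0_l in E.
Qed.
Lemma vadd_self_0 u x : vadd u x = u -> x = vzero.
Proof. intro E. apply (vadd_cancel_l u). now rewrite vadd_0. Qed.

Lemma vscal_0 x : vscal C0 x = vzero.
Proof.
  apply (vadd_self_0 (vscal C0 x)). rewrite <- vscal_addC. f_equal. ring.
Qed.
Lemma vscal_v0 c : vscal c (@vzero H) = vzero.
Proof. apply (vadd_self_0 (vscal c vzero)). now rewrite <- vscal_addv, vadd_0. Qed.
Lemma vopp_scal x : vopp x = vscal mone x.
Proof.
  apply (vadd_cancel_l x). rewrite vadd_opp.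
  rewrite <- (vscal_1 H x) at 1. rewrite <- vscal_addC.
  unfold mone. replace (Cadd C1 (Copp C1)) with C0 by ring. now rewrite vscal_0.
Qed.
Lemma vsub_scal x y : vsub H x y = vadd x (vscal mone y).
Proof. unfold vsub. now rewrite vopp_scal. Qed.

Lemma vadd_swap4 x y z u : vadd (vadd x y) (vadd z u) = vadd (vadd x z) (vadd y u).
Proof.
  rewrite <- !vadd_assoc. f_equal. rewrite !vadd_assoc. f_equal. apply vadd_comm.
Qed.
Lemma vsub_self x : vsub H x x = vzero.
Proof. apply vadd_opp. Qed.
Lemma vadd_vsub x y : vadd y (vsub H x y) = x.
Proof. unfold vsub. now rewrite vadd_comm, <- vadd_assoc, vadd_opp_l, vadd_0. Qed.
Lemma vsub_eq0 x y : vsub H x y = vzero -> x = y.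
Proof. intro E. now rewrite <- (vadd_vsub x y), E, vadd_0. Qed.
Lemma vsub_vsub x y : vsub H x (vsub H x y) = y.
Proof.
  apply (vadd_cancel_l (vsub H x y)). rewrite vadd_vsub, vadd_comm. now rewrite vadd_vsub.
Qed.
Lemma vsub_add_l x y z : vsub H (vadd x y) z = vadd (vsub H x z) y.
Proof. unfold vsub. rewrite <- !vadd_assoc. f_equal. apply vadd_comm. Qed.
Lemma vsub_add_r x y z : vsub H x (vadd y z) = vsub H (vsub H x y) z.
Proof. now rewrite !vsub_scal, vscal_addv, vadd_assoc. Qed.
Lemma vsub_swap4 x y z u : vsub H (vsub H x y) (vsub H z u) = vsub H (vsub H x z) (vsub H y u).
Proof. rewrite !vsub_scal, !vscal_addv, !vscal_mul. apply vadd_swap4. Qed.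
Lemma vscal_sub c x y : vscal c (vsub H x y) = vsub H (vscal c x) (vscal c y).
Proof. rewrite !vsub_scal, vscal_addv, !vscal_mul. do 2 f_equal. ring. Qed.

Lemma inner_add_r x y z : inner x (vadd y z) = Cadd (inner x y) (inner x z).
Proof. now rewrite inner_conj, inner_add_l, Cconj_add, <- !inner_conj. Qed.
Lemma inner_scal_r c x y : inner x (vscal c y) = Cmul (Cconj c) (inner x y).
Proof. now rewrite inner_conj, inner_scal_l, Cconj_mul, <- inner_conj. Qed.
Lemma inner_0_l y : inner vzero y = C0.
Proof. rewrite <- (vscal_0 vzero), inner_scal_l. ring. Qed.
Lemma inner_0_r y : inner y vzero = C0.
Proof. rewrite inner_conj, inner_0_l. apply Cx_eq; simpl; ring. Qed.
Lemma inner_sub_l x y z : inner (vsub H x y) z = Csub (inner x z) (inner y z).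
Proof. rewrite vsub_scal, inner_add_l, inner_scal_l. unfold mone, Csub. ring. Qed.
Lemma inner_sub_r x y z : inner z (vsub H x y) = Csub (inner z x) (inner z y).
Proof. rewrite vsub_scal, inner_add_r, inner_scal_r, Cconj_mone. unfold mone, Csub. ring. Qed.
Lemma Im_inner_self x : Im (inner x x) = 0.
Proof. assert (E := f_equal Im (inner_conj H x x)). simpl in E. lra. Qed.
Lemma Re_inner_sym x y : Re (inner x y) = Re (inner y x).
Proof. now rewrite (inner_conj H x y). Qed.

Lemma inner_ext u v : (forall z, inner z u = inner z v) -> u = v.
Proof.
  intro E. apply vsub_eq0, inner_def.
  rewrite inner_sub_r, E. simpl. ring.
Qed.

Lemma nrm_ge0 x : 0 <= vnorm H x.
Proof. apply sqrt_pos. Qed.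
Lemma nrm_sq x : vnorm H x * vnorm H x = Re (inner x x).
Proof. apply sqrt_sqrt, inner_pos. Qed.
Lemma nrm_0 : vnorm H vzero = 0.
Proof. unfold vnorm. rewrite inner_0_l. apply sqrt_0. Qed.
Lemma nrm_le_of_sq x c : 0 <= c -> Re (inner x x) <= c * c -> vnorm H x <= c.
Proof. intros Hc E. rewrite <- nrm_sq in E. pose proof (nrm_ge0 x). nra. Qed.

Lemma nrm_small0 x : (forall eps, eps > 0 -> vnorm H x <= eps) -> x = vzero.
Proof.
  intro E. apply inner_def. rewrite <- nrm_sq.
  destruct (Req_dec (vnorm H x) 0) as [->|Hn]; [ring|].
  pose proof (nrm_ge0 x). specialize (E (vnorm H x / 2)). lra.
Qed.

Lemma Re_inner_add x y :
  Re (inner (vadd x y) (vadd x y)) = Re (inner x x) + 2 * Re (inner x y) + Re (inner y y).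
Proof. rewrite !inner_add_l, !inner_add_r. simpl. rewrite (Re_inner_sym y x). ring. Qed.
Lemma Re_inner_scal c x :
  Re (inner (vscal c x) (vscal c x)) = (Re c * Re c + Im c * Im c) * Re (inner x x).
Proof. rewrite inner_scal_l, inner_scal_r. simpl. rewrite Im_inner_self. ring. Qed.
Lemma Re_inner_scal_r r x y : Re (inner x (vscal (rc r) y)) = r * Re (inner x y).
Proof. rewrite inner_scal_r. simpl. ring. Qed.

(* Cauchy-Schwarz, from the nonnegativity of the quadratic l |-> |x - l y|^2. *)
Lemma cauchy_schwarz x y : Re (inner x y) <= vnorm H x * vnorm H y.
Proof.
  set (a := Re (inner x x)). set (b := Re (inner y y)). set (r := Re (inner x y)).
  assert (Q : forall l, 0 <= a - 2 * l * r + l * l * b).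
  { intro l. pose proof (inner_pos H (vadd x (vscal (rc (- l)) y))) as P.
    rewrite Re_inner_add, Re_inner_scal_r, Re_inner_scal in P. simpl in P.
    unfold a, b, r. nra. }
  assert (Hab : r * r <= a * b).
  { assert (Ha0 : 0 <= a) by apply inner_pos. assert (Hb0 : 0 <= b) by apply inner_pos.
    destruct (Rle_lt_or_eq_dec 0 b Hb0) as [Hb|Hb].
    - specialize (Q (r / b)).
      replace (a - 2 * (r / b) * r + r / b * (r / b) * b) with ((a * b - r * r) / b) in Q
        by (field; lra).
      apply Rmult_le_compat_r with (r := b) in Q; [|lra].
      unfold Rdiv in Q. rewrite Rmult_assoc, Rinv_l in Q by lra. lra.
    - assert (Hy : y = vzero) by (apply inner_def; symmetry; exact Hb).
      assert (r = 0) as -> by (unfold r; rewrite Hy, inner_0_r; reflexivity).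
      rewrite <- Hb. lra. }
  unfold vnorm. rewrite <- sqrt_mult_alt by apply inner_pos. fold a b r.
  destruct (Rle_dec r 0); [pose proof (sqrt_pos (a * b)); lra|].
  rewrite <- (sqrt_square r) by lra. apply sqrt_le_1_alt. exact Hab.
Qed.

Lemma nrm_tri x y : vnorm H (vadd x y) <= vnorm H x + vnorm H y.
Proof.
  apply nrm_le_of_sq. pose proof (nrm_ge0 x); pose proof (nrm_ge0 y); lra.
  rewrite Re_inner_add. pose proof (cauchy_schwarz x y). rewrite <- !nrm_sq. nra.
Qed.
Lemma nrm_scal c x : vnorm H (vscal c x) = Cabs c * vnorm H x.
Proof. unfold vnorm, Cabs. rewrite Re_inner_scal. apply sqrt_mult_alt. nra. Qed.
Lemma nrm_sub x y : vnorm H (vsub H x y) <= vnorm H x + vnorm H y.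
Proof. rewrite vsub_scal. eapply Rle_trans; [apply nrm_tri|]. rewrite nrm_scal, Cabs_mone. lra. Qed.
Lemma nrm_sub_sym x y : vnorm H (vsub H x y) = vnorm H (vsub H y x).
Proof.
  replace (vsub H x y) with (vscal mone (vsub H y x)).
  { now rewrite nrm_scal, Cabs_mone, Rmult_1_l. }
  rewrite !vsub_scal, vscal_addv, vscal_mul. unfold mone.
  replace (Cmul (Copp C1) (Copp C1)) with C1 by ring. now rewrite vscal_1, vadd_comm.
Qed.
Lemma nrm_sub_tri x y z : vnorm H (vsub H x z) <= vnorm H (vsub H x y) + vnorm H (vsub H y z).
Proof.
  replace (vsub H x z) with (vadd (vsub H x y) (vsub H y z)) by
    (unfold vsub; rewrite <- vadd_assoc; f_equal; now rewrite vadd_assoc, vadd_opp_l, vadd_0_l).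
  apply nrm_tri.
Qed.

End Vectors.

Section Operators.
Variable H : HilbertSpace.
Implicit Types A B : op H.

Lemma bound_id : op_norm_le H (op_id H) 1.
Proof. intro x. unfold op_id. lra. Qed.
Lemma bound_add A B a b :
  op_norm_le H A a -> op_norm_le H B b -> op_norm_le H (op_add H A B) (a + b).
Proof. intros hA hB x. eapply Rle_trans; [apply nrm_tri|]. specialize (hA x); specialize (hB x). lra. Qed.
Lemma bound_sub A B a b :
  op_norm_le H A a -> op_norm_le H B b -> op_norm_le H (op_sub H A B) (a + b).
Proof. intros hA hB x. eapply Rle_trans; [apply nrm_sub|]. specialize (hA x); specialize (hB x). lra. Qed.
Lemma bound_scal c A a : op_norm_le H A a -> op_norm_le H (op_scal H c A) (Cabs c * a).
Proof.
  intros hA x. unfold op_scal. rewrite nrm_scal, Rmult_assoc.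
  apply Rmult_le_compat_l; [apply Cabs_ge0 | apply hA].
Qed.
Lemma bound_comp A B a b :
  0 <= a -> op_norm_le H A a -> op_norm_le H B b -> op_norm_le H (op_comp H A B) (a * b).
Proof.
  intros ha hA hB x. unfold op_comp. eapply Rle_trans; [apply hA|].
  rewrite Rmult_assoc. now apply Rmult_le_compat_l.
Qed.

Lemma lin_0 A : is_linear H A -> A vzero = vzero.
Proof. intros [_ hs]. now rewrite <- (vscal_0 H vzero), hs, !vscal_0. Qed.
Lemma lin_sub A x y : is_linear H A -> A (vsub H x y) = vsub H (A x) (A y).
Proof. intros [ha hs]. now rewrite !vsub_scal, ha, hs. Qed.

Lemma adjoint_sym A A' : is_adjoint H A A' -> is_adjoint H A' A.
Proof. intros hA x y. now rewrite inner_conj, <- hA, <- inner_conj. Qed.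

Lemma adjoint_linear A A' : is_adjoint H A A' -> is_linear H A.
Proof.
  intro hA. apply adjoint_sym in hA. split.
  - intros x y. apply inner_ext. intro z. now rewrite <- hA, !inner_add_r, <- !hA.
  - intros c x. apply inner_ext. intro z. now rewrite <- hA, !inner_scal_r, <- !hA.
Qed.

Lemma adjoint_bound A A' c :
  0 <= c -> is_adjoint H A A' -> op_norm_le H A c -> op_norm_le H A' c.
Proof.
  intros hc hA hb y.
  pose proof (cauchy_schwarz H (A (A' y)) y) as CS.
  rewrite hA, <- nrm_sq in CS. pose proof (hb (A' y)).
  pose proof (nrm_ge0 H (A' y)). pose proof (nrm_ge0 H y). pose proof (nrm_ge0 H (A (A' y))).
  set (a := vnorm H (A' y)) in *.
  destruct (Req_dec a 0) as [->|ha]; [nra|].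
  apply Rmult_le_reg_l with a; nra.
Qed.

Lemma adjoint_id : is_adjoint H (op_id H) (op_id H).
Proof. now intros x y. Qed.
Lemma adjoint_add A A' B B' :
  is_adjoint H A A' -> is_adjoint H B B' -> is_adjoint H (op_add H A B) (op_add H A' B').
Proof. intros hA hB x y. unfold op_add. now rewrite inner_add_l, inner_add_r, hA, hB. Qed.
Lemma adjoint_sub A A' B B' :
  is_adjoint H A A' -> is_adjoint H B B' -> is_adjoint H (op_sub H A B) (op_sub H A' B').
Proof. intros hA hB x y. unfold op_sub. now rewrite inner_sub_l, inner_sub_r, hA, hB. Qed.
Lemma adjoint_scal c A A' :
  is_adjoint H A A' -> is_adjoint H (op_scal H c A) (op_scal H (Cconj c) A').
Proof. intros hA x y. unfold op_scal. now rewrite inner_scal_l, inner_scal_r, Cconj_invol, hA. Qed.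
Lemma adjoint_comp A A' B B' :
  is_adjoint H A A' -> is_adjoint H B B' -> is_adjoint H (op_comp H A B) (op_comp H B' A').
Proof. intros hA hB x y. unfold op_comp. now rewrite hA, hB. Qed.

Lemma op_sub_add A B : op_sub H A B = op_add H A (op_scal H mone B).
Proof. apply functional_extensionality. intro x. apply vsub_scal. Qed.

Lemma cs_sub T Tstar A B :
  in_Cstar H T Tstar A -> in_Cstar H T Tstar B -> in_Cstar H T Tstar (op_sub H A B).
Proof. intros. rewrite op_sub_add. now apply cs_add, cs_scal. Qed.

End Operators.

Lemma pow_le_mono_r (r : R) n p : 0 <= r <= 1 -> (n <= p)%nat -> r ^ p <= r ^ n.
Proof.
  intros Hr Hnp. replace p with (n + (p - n))%nat by lia. rewrite pow_add.
  assert (r ^ (p - n) <= 1) by (rewrite <- (pow1 (p - n)); apply pow_incr; lra).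
  assert (0 <= r ^ n) by (apply pow_le; lra). nra.
Qed.

Lemma geometric_small (r C eps : R) :
  0 <= r < 1 -> 0 <= C -> eps > 0 -> exists n, C * r ^ n < eps.
Proof.
  intros Hr HC He. destruct (pow_lt_1_zero r) with (y := eps / (C + 1)) as [n Hn].
  - rewrite Rabs_pos_eq; lra.
  - apply Rdiv_lt_0_compat; lra.
  - exists n. specialize (Hn n (le_n n)). rewrite Rabs_pos_eq in Hn by (apply pow_le; lra).
    apply Rmult_lt_compat_l with (r := C + 1) in Hn; [|lra].
    replace ((C + 1) * (eps / (C + 1))) with eps in Hn by (field; lra).
    assert (0 <= r ^ n) by (apply pow_le; lra). nra.
Qed.

Lemma le_of_le_eps (a b : R) : (forall eps, eps > 0 -> a <= b + eps) -> a <= b.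
Proof. intro E. destruct (Rle_dec a b); auto. specialize (E ((a - b) / 2)). lra. Qed.

Fixpoint opow (H : HilbertSpace) (A : op H) (n : nat) : op H :=
  match n with O => op_id H | S n => op_comp H A (opow H A n) end.
Fixpoint esum (H : HilbertSpace) (A : op H) (n : nat) : op H :=
  match n with O => op_scal H C0 (op_id H) | S n => op_add H (esum H A n) (opow H A n) end.

Section Neumann.
Variable H : HilbertSpace.
Variables T Tstar B : op H.
Variable r : R.
Hypothesis hB_lin : is_linear H B.
Hypothesis hB_cs : in_Cstar H T Tstar B.
Hypothesis hr : 0 <= r < 1.
Hypothesis hB_bound : op_norm_le H B r.

Lemma opow_bound n : op_norm_le H (opow H B n) (r ^ n).
Proof.
  induction n as [|n IH]; intro x; simpl.
  - unfold op_id. lra.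
  - unfold op_comp. eapply Rle_trans; [apply hB_bound|].
    rewrite Rmult_assoc. apply Rmult_le_compat_l; [lra | apply IH].
Qed.

Lemma opow_cs n : in_Cstar H T Tstar (opow H B n).
Proof. induction n; simpl; [apply cs_id | now apply cs_comp]. Qed.

Lemma esum_cs n : in_Cstar H T Tstar (esum H B n).
Proof. induction n; simpl; [apply cs_scal, cs_id | apply cs_add; auto; apply opow_cs]. Qed.

Lemma esum_telescope n x :
  vsub H (esum H B n x) (B (esum H B n x)) = vsub H x (opow H B n x).
Proof.
  induction n as [|n IH]; simpl.
  - unfold op_scal, op_id. now rewrite vscal_0, (lin_0 H B hB_lin), !vsub_self.
  - unfold op_add, op_comp. destruct hB_lin as [hadd _].
    rewrite hadd, vsub_add_r, vsub_add_l, IH.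
    now rewrite vadd_comm, vadd_vsub.
Qed.

Lemma esum_cauchy n p x : (n <= p)%nat ->
  vnorm H (vsub H (esum H B p x) (esum H B n x)) <= r ^ n / (1 - r) * vnorm H x.
Proof.
  intro Hnp. replace p with (n + (p - n))%nat by lia.
  assert (Hd : forall d, vnorm H (vsub H (esum H B (n + d) x) (esum H B n x))
                         <= (r ^ n - r ^ (n + d)) / (1 - r) * vnorm H x).
  { induction d as [|d IH].
    - rewrite Nat.add_0_r, vsub_self, nrm_0, Rminus_diag. unfold Rdiv. lra.
    - rewrite Nat.add_succ_r. simpl. unfold op_add. rewrite vsub_add_l.
      eapply Rle_trans; [apply nrm_tri|]. pose proof (opow_bound (n + d) x).
      replace ((r ^ n - r * r ^ (n + d)) / (1 - r) * vnorm H x) with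
        ((r ^ n - r ^ (n + d)) / (1 - r) * vnorm H x + r ^ (n + d) * vnorm H x) by (field; lra).
      lra. }
  eapply Rle_trans; [apply Hd|]. apply Rmult_le_compat_r; [apply nrm_ge0|].
  apply Rmult_le_compat_r; [left; apply Rinv_0_lt_compat; lra|].
  assert (0 <= r ^ (n + (p - n))) by (apply pow_le; lra). lra.
Qed.

Lemma esum_converges x : exists l, forall eps, eps > 0 ->
  exists N, forall p, (N <= p)%nat -> vnorm H (vsub H (esum H B p x) l) < eps.
Proof.
  apply (complete H (fun p => esum H B p x)). intros eps He.
  destruct (geometric_small r (vnorm H x / (1 - r)) eps) as [N HN]; auto.
  { apply Rmult_le_pos; [apply nrm_ge0 | left; apply Rinv_0_lt_compat; lra]. }
  assert (Hb : forall p q, (N <= q)%nat -> (q <= p)%nat ->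
             vnorm H (vsub H (esum H B p x) (esum H B q x)) < eps).
  { intros p q Hq Hqp. eapply Rle_lt_trans; [now apply esum_cauchy|].
    eapply Rle_lt_trans; [|apply HN].
    replace (vnorm H x / (1 - r) * r ^ N) with (r ^ N / (1 - r) * vnorm H x) by (field; lra).
    apply Rmult_le_compat_r; [apply nrm_ge0|].
    apply Rmult_le_compat_r; [left; apply Rinv_0_lt_compat; lra|].
    apply pow_le_mono_r; auto; lra. }
  exists N. intros p q Hp Hq. change (vnorm H (vsub H (esum H B p x) (esum H B q x)) < eps).
  destruct (Nat.le_ge_cases q p); [now apply Hb|]. rewrite nrm_sub_sym. now apply Hb.
Qed.

Definition neumann (x : H) : H :=
  proj1_sig (constructive_indefinite_description _ (esum_converges x)).

Lemma neumann_tail n x :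
  vnorm H (vsub H (neumann x) (esum H B n x)) <= r ^ n / (1 - r) * vnorm H x.
Proof.
  assert (Hw : forall eps, eps > 0 -> exists N, forall p, (N <= p)%nat ->
                 vnorm H (vsub H (esum H B p x) (neumann x)) < eps).
  { unfold neumann. now destruct (constructive_indefinite_description _ (esum_converges x)). }
  apply le_of_le_eps. intros eps He. destruct (Hw eps He) as [N HN].
  specialize (HN (max N n) (Nat.le_max_l _ _)). rewrite nrm_sub_sym in HN.
  eapply Rle_trans; [apply (nrm_sub_tri H _ (esum H B (max N n) x))|].
  pose proof (esum_cauchy n (max N n) x (Nat.le_max_r _ _)). lra.
Qed.

(* The tail estimate is uniform in x, so the partial sums converge in norm. *)
Lemma neumann_cs : in_Cstar H T Tstar neumann.
Proof.
  apply cs_lim. intros eps He.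
  destruct (geometric_small r (/ (1 - r)) eps) as [n Hn]; auto.
  { left; apply Rinv_0_lt_compat; lra. }
  exists (esum H B n). split; [apply esum_cs|]. intro x. unfold op_sub.
  eapply Rle_trans; [apply neumann_tail|]. apply Rmult_le_compat_r; [apply nrm_ge0|].
  unfold Rdiv. rewrite Rmult_comm. lra.
Qed.

Lemma neumann_inverse x : vsub H (neumann x) (B (neumann x)) = x.
Proof.
  apply vsub_eq0, nrm_small0. intros eps He.
  destruct (geometric_small r ((1 + r) / (1 - r) * vnorm H x + vnorm H x) eps) as [n Hn]; auto.
  { assert (0 <= (1 + r) / (1 - r)) by (apply Rmult_le_pos; [lra | left; apply Rinv_0_lt_compat; lra]).
    pose proof (nrm_ge0 H x). nra. }
  set (w := neumann x). set (e := esum H B n x). set (p := opow H B n x).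
  (* (1 - B)(w - e) = (1 - B) w - (x - B^n x) is small, and so is B^n x. *)
  assert (Ediff : vsub H (vsub H w e) (B (vsub H w e))
                  = vsub H (vsub H w (B w)) (vsub H x p)).
  { rewrite (lin_sub H B _ _ hB_lin), vsub_swap4. unfold e, p. now rewrite esum_telescope. }
  assert (Hdiff : vnorm H (vsub H (vsub H w (B w)) (vsub H x p))
                  <= (1 + r) * (r ^ n / (1 - r) * vnorm H x)).
  { rewrite <- Ediff. eapply Rle_trans; [apply nrm_sub|].
    pose proof (neumann_tail n x) as Ht. pose proof (hB_bound (vsub H w e)).
    fold w e in Ht. nra. }
  assert (Hp : vnorm H (vsub H (vsub H x p) x) <= r ^ n * vnorm H x).
  { rewrite nrm_sub_sym, vsub_vsub. apply opow_bound. }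
  eapply Rle_trans; [apply (nrm_sub_tri H _ (vsub H x p))|].
  assert ((1 + r) * (r ^ n / (1 - r) * vnorm H x) + r ^ n * vnorm H x
          = ((1 + r) / (1 - r) * vnorm H x + vnorm H x) * r ^ n) by (field; lra).
  lra.
Qed.

End Neumann.

Lemma coercive_contraction (H : HilbertSpace) (S : op H) (m M : R) :
  0 < m <= M ->
  (forall x, m * (vnorm H x * vnorm H x) <= Re (inner (S x) x)) ->
  op_norm_le H S M ->
  op_norm_le H (op_sub H (op_id H) (op_scal H (rc (m / (M * M))) S))
    (1 - m * (m / (M * M)) / 2).
Proof.
  intros hm hcoer hbound x. set (k := m / (M * M)).
  assert (hk : k * (M * M) = m) by (unfold k; field; lra).
  assert (hk0 : 0 < k) by (unfold k; apply Rdiv_lt_0_compat; nra).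
  assert (hkm : m * k <= 1).
  { apply (Rmult_le_reg_r (M * M)); [nra|].
    replace (m * k * (M * M)) with (m * m) by (rewrite Rmult_assoc, hk; ring). nra. }
  unfold op_sub, op_scal, op_id. rewrite vsub_scal, vscal_mul.
  replace (Cmul mone (rc k)) with (rc (- k)) by (apply Cx_eq; unfold mone, rc; simpl; ring).
  apply nrm_le_of_sq; [apply Rmult_le_pos; [nra | apply nrm_ge0]|].
  rewrite Re_inner_add, Re_inner_scal_r, Re_inner_scal, (Re_inner_sym H x (S x)). simpl.
  rewrite <- !nrm_sq.
  pose proof (hcoer x) as hq. pose proof (hbound x) as hs.
  pose proof (nrm_ge0 H x). pose proof (nrm_ge0 H (S x)).
  set (n := vnorm H x) in *. set (s := vnorm H (S x)) in *. set (q := Re (inner (S x) x)) in *.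
  assert (k * k * (s * s) <= k * m * (n * n)).
  { assert (s * s <= M * M * (n * n)) by nra.
    replace (k * m * (n * n)) with (k * k * (M * M * (n * n))) by (rewrite <- hk; ring).
    apply Rmult_le_compat_l; nra. }
  nra.
Qed.

Section IdempotentProjection.
Variable H : HilbertSpace.
Variables T Tstar F F' : op H.
Variable c : R.
Hypothesis hF_adj : is_adjoint H F F'.
Hypothesis hF_cs : in_Cstar H T Tstar F.
Hypothesis hF'_cs : in_Cstar H T Tstar F'.
Hypothesis hc : 0 <= c.
Hypothesis hF_bound : op_norm_le H F c.
Hypothesis hF_idem : forall x, F (F x) = F x.

Let hF'_lin : is_linear H F' := adjoint_linear H F' F (adjoint_sym H F F' hF_adj).

Definition Fco : op H := op_sub H (op_id H) F.
Definition Fco' : op H := op_sub H (op_id H) F'.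
Definition Sgram : op H := op_add H (op_comp H F F') (op_comp H Fco' Fco).

Lemma F'_idem x : F' (F' x) = F' x.
Proof.
  apply inner_ext. intro z. rewrite <- !hF_adj. now rewrite hF_idem.
Qed.

Lemma Sgram_adjoint : is_adjoint H Sgram Sgram.
Proof.
  assert (hG : is_adjoint H Fco Fco') by (apply adjoint_sub; [apply adjoint_id | exact hF_adj]).
  apply adjoint_add.
  - apply adjoint_comp; [exact hF_adj | now apply adjoint_sym].
  - apply adjoint_comp; [now apply adjoint_sym | exact hG].
Qed.

Lemma Sgram_cs : in_Cstar H T Tstar Sgram.
Proof. apply cs_add; apply cs_comp; auto; apply cs_sub; auto; apply cs_id. Qed.

Lemma Sgram_form x :
  Re (inner (Sgram x) x) = vnorm H (F' x) * vnorm H (F' x) + vnorm H (Fco x) * vnorm H (Fco x).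
Proof.
  assert (hG' : is_adjoint H Fco' Fco)
    by (apply adjoint_sub; [apply adjoint_id | now apply adjoint_sym]).
  unfold Sgram, op_add, op_comp. rewrite inner_add_l, hF_adj, hG', !nrm_sq. reflexivity.
Qed.

(* Every x splits as F x + (1 - F) x, hence |x| <= |F' x| + |(1 - F) x|
   and Re <S x, x> >= |x|^2 / 2. *)
Lemma Sgram_coercive x : / 2 * (vnorm H x * vnorm H x) <= Re (inner (Sgram x) x).
Proof.
  rewrite Sgram_form.
  assert (Hsplit : vnorm H x <= vnorm H (F' x) + vnorm H (Fco x)).
  { assert (Q : Re (inner x x) <= vnorm H x * (vnorm H (F' x) + vnorm H (Fco x))).
    { rewrite <- (vadd_vsub H x (F x)) at 1. rewrite inner_add_l. simpl. rewrite hF_adj.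
      pose proof (cauchy_schwarz H x (F' x)). pose proof (cauchy_schwarz H (Fco x) x).
      unfold Fco, op_sub, op_id in *. nra. }
    rewrite <- nrm_sq in Q. pose proof (nrm_ge0 H x). pose proof (nrm_ge0 H (F' x)).
    pose proof (nrm_ge0 H (Fco x)).
    destruct (Req_dec (vnorm H x) 0) as [->|Hx]; [lra|].
    apply Rmult_le_reg_l with (vnorm H x); nra. }
  pose proof (nrm_ge0 H x). pose proof (nrm_ge0 H (F' x)). pose proof (nrm_ge0 H (Fco x)).
  assert (vnorm H x * vnorm H x <= (vnorm H (F' x) + vnorm H (Fco x)) * (vnorm H (F' x) + vnorm H (Fco x)))
    by (apply Rmult_le_compat; lra).
  pose proof (Rle_0_sqr (vnorm H (F' x) - vnorm H (Fco x))). unfold Rsqr in *. nra.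
Qed.

(* A norm bound for S, using ||F'|| = ||F|| <= c. *)
Definition Sbound : R := c * c + (1 + c) * (1 + c).

Lemma Sgram_bound : op_norm_le H Sgram Sbound.
Proof.
  pose proof (adjoint_bound H F F' c hc hF_adj hF_bound) as hF'.
  unfold Sgram, Sbound. apply bound_add.
  - now apply bound_comp.
  - apply bound_comp; [lra | |]; apply bound_sub; auto; apply bound_id.
Qed.

Lemma Sbound_ge1 : 1 <= Sbound.
Proof. unfold Sbound. nra. Qed.

Definition kappa : R := / 2 / (Sbound * Sbound).
Definition Sdamped : op H := op_sub H (op_id H) (op_scal H (rc kappa) Sgram).
Definition rate : R := 1 - / 2 * kappa / 2.

Lemma Sdamped_contraction : op_norm_le H Sdamped rate.
Proof.
  pose proof Sbound_ge1.
  apply coercive_contraction; [lra | apply Sgram_coercive | apply Sgram_bound].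
Qed.

Lemma rate_range : 0 <= rate < 1.
Proof.
  pose proof Sbound_ge1. unfold rate, kappa.
  assert (0 < / 2 / (Sbound * Sbound) <= / 2).
  { split; [apply Rdiv_lt_0_compat; nra|].
    apply Rmult_le_reg_r with (Sbound * Sbound); [nra|].
    unfold Rdiv. rewrite Rmult_assoc, Rinv_l by nra. nra. }
  lra.
Qed.

Lemma Sdamped_adjoint : is_adjoint H Sdamped Sdamped.
Proof.
  unfold Sdamped. pattern (rc kappa) at 2. rewrite <- Cconj_rc.
  apply adjoint_sub; [apply adjoint_id | apply adjoint_scal, Sgram_adjoint].
Qed.

(* S^-1 = kappa (1 - (1 - kappa S))^-1, computed as a Neumann series. *)
Definition Sinv : op H := op_scal H (rc kappa)
  (neumann H Sdamped rate rate_range Sdamped_contraction).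

Lemma Sinv_cs : in_Cstar H T Tstar Sinv.
Proof.
  apply cs_scal, neumann_cs.
  apply cs_sub; [apply cs_id | apply cs_scal, Sgram_cs].
Qed.

Lemma Sgram_Sinv x : Sgram (Sinv x) = x.
Proof.
  pose proof (neumann_inverse H Sdamped rate (adjoint_linear H _ _ Sdamped_adjoint)
                rate_range Sdamped_contraction x) as E.
  unfold Sinv, op_scal. destruct (adjoint_linear H _ _ Sgram_adjoint) as [_ hS].
  rewrite hS. unfold Sdamped, op_sub, op_scal, op_id in E. now rewrite vsub_vsub in E.
Qed.

(* F' S = F' F F', since F' (1 - F') = 0. *)
Lemma F'_Sgram x : F' (Sgram x) = F' (F (F' x)).
Proof.
  destruct hF'_lin as [hadd _].
  unfold Sgram, op_add, op_comp. rewrite hadd.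
  unfold Fco' at 1, op_sub, op_id. rewrite (lin_sub H F' _ _ hF'_lin), F'_idem, vsub_self.
  apply vadd_0.
Qed.

(* The orthogonal projection onto ran F: P = F F' S^-1.  Its range lies in
   ran F and F' (x - P x) = F' x - F' S S^-1 x = 0, i.e. x - P x is orthogonal
   to ran F. *)
Definition Pran : op H := op_comp H F (op_comp H F' Sinv).

Lemma idempotent_orth_proj :
  in_Cstar H T Tstar Pran /\ is_orth_proj H (fun y => F y = y) Pran.
Proof.
  split; [apply cs_comp; [|apply cs_comp]; auto; apply Sinv_cs|].
  intro x. split; [unfold Pran, op_comp; apply hF_idem|].
  intros y Fy.
  assert (Hker : F' (vsub H x (Pran x)) = vzero).
  { unfold Pran, op_comp. rewrite (lin_sub H F' _ _ hF'_lin), <- F'_Sgram, Sgram_Sinv.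
    apply vsub_self. }
  rewrite <- Fy, <- (adjoint_sym H F F' hF_adj), Hker. apply inner_0_l.
Qed.

End IdempotentProjection.

Lemma orth_proj_ext (H : HilbertSpace) (M M' : H -> Prop) (P : op H) :
  (forall x, M x <-> M' x) -> is_orth_proj H M P -> is_orth_proj H M' P.
Proof.
  intros hMM hP x. destruct (hP x) as [hPx hortho]. split.
  - now apply hMM.
  - intros y hy. now apply hortho, hMM.
Qed.

Lemma orth_proj_diff (H : HilbertSpace) (M0 M1 : H -> Prop) (P0 P1 : op H) :
  (forall x y, M1 x -> M1 y -> M1 (vsub H x y)) ->
  (forall x, M0 x -> M1 x) ->
  is_orth_proj H M0 P0 -> is_orth_proj H M1 P1 ->
  is_orth_proj H (fun x => M1 x /\ forall y, M0 y -> inner x y = C0) (op_sub H P1 P0).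
Proof.
  intros hsub h01 hP0 hP1 x. unfold op_sub.
  destruct (hP0 x) as [hP0x hortho0]. destruct (hP1 x) as [hP1x hortho1]. split; [split|].
  - apply hsub; auto.
  - intros y hy. pose proof (hortho1 y (h01 y hy)) as e1. pose proof (hortho0 y hy) as e0.
    rewrite inner_sub_l in *.
    apply (f_equal Re) in e1 as e1r; apply (f_equal Im) in e1 as e1i.
    apply (f_equal Re) in e0 as e0r; apply (f_equal Im) in e0 as e0i.
    simpl in *. apply Cx_eq; simpl; lra.
  - intros y [hy hy0]. pose proof (hortho1 y hy) as e1.
    rewrite inner_sub_l in *. rewrite inner_sub_l, (inner_conj H y (P0 x)), (hy0 _ hP0x).
    apply (f_equal Re) in e1 as e1r; apply (f_equal Im) in e1 as e1i.
    simpl in *. apply Cx_eq; simpl; lra.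
Qed.

Section Polynomials.
Variable H : HilbertSpace.
Variables T Tstar : op H.
Hypothesis hT : bounded_op H T.
Hypothesis hadj : is_adjoint H T Tstar.

Inductive Pol : op H -> Prop :=
| pol_id : Pol (op_id H)
| pol_T : Pol T
| pol_add A B : Pol A -> Pol B -> Pol (op_add H A B)
| pol_scal c A : Pol A -> Pol (op_scal H c A)
| pol_comp A B : Pol A -> Pol B -> Pol (op_comp H A B).

Lemma Pol_cs A : Pol A -> in_Cstar H T Tstar A.
Proof. induction 1; now constructor. Qed.

Lemma Pol_adjoint A : Pol A -> exists A', is_adjoint H A A' /\ in_Cstar H T Tstar A'.
Proof.
  induction 1 as [| |A B _ [A' [hA cA]] _ [B' [hB cB]]|c A _ [A' [hA cA]]
                 |A B _ [A' [hA cA]] _ [B' [hB cB]]].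
  - exists (op_id H). split; [apply adjoint_id | apply cs_id].
  - exists Tstar. split; [exact hadj | apply cs_Tstar].
  - exists (op_add H A' B'). split; [now apply adjoint_add | now apply cs_add].
  - exists (op_scal H (Cconj c) A'). split; [now apply adjoint_scal | now apply cs_scal].
  - exists (op_comp H B' A'). split; [now apply adjoint_comp | now apply cs_comp].
Qed.

Lemma Pol_linear A : Pol A -> is_linear H A.
Proof. intro hA. destruct (Pol_adjoint A hA) as [A' [hA' _]]. exact (adjoint_linear H A A' hA'). Qed.

Lemma Pol_bound A : Pol A -> exists c, 0 <= c /\ op_norm_le H A c.
Proof.
  induction 1 as [| |A B _ [a [ha hA]] _ [b [hb hB]]|c A _ [a [ha hA]]
                 |A B _ [a [ha hA]] _ [b [hb hB]]].
  - exists 1. split; [lra | apply bound_id].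
  - destruct hT as [_ [M hM]]. exists (Rabs M). split; [apply Rabs_pos|].
    intro x. eapply Rle_trans; [apply hM|].
    apply Rmult_le_compat_r; [apply nrm_ge0 | apply Rle_abs].
  - exists (a + b). split; [lra | now apply bound_add].
  - exists (Cabs c * a). split; [apply Rmult_le_pos; auto; apply Cabs_ge0 | now apply bound_scal].
  - exists (a * b). split; [now apply Rmult_le_pos | now apply bound_comp].
Qed.

Lemma Pol_comm_T A x : Pol A -> A (T x) = T (A x).
Proof.
  destruct hT as [[hTa hTs] _]. intro hA. revert x.
  induction hA; intro x; unfold op_id, op_add, op_scal, op_comp; auto.
  - now rewrite IHhA1, IHhA2, hTa.
  - now rewrite IHhA, hTs.
  - now rewrite IHhA2, IHhA1.
Qed.

Lemma Pol_comm A B x : Pol A -> Pol B -> A (B x) = B (A x).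
Proof.
  intros hA hB. destruct (Pol_linear B hB) as [hBa hBs]. revert x.
  induction hA; intro x; unfold op_id, op_add, op_scal, op_comp; auto.
  - symmetry. now apply Pol_comm_T.
  - now rewrite IHhA1, IHhA2, hBa.
  - now rewrite IHhA, hBs.
  - now rewrite IHhA2, IHhA1.
Qed.

Lemma Pol_idempotent_orth_proj F :
  Pol F -> (forall x, F (F x) = F x) ->
  exists P, in_Cstar H T Tstar P /\ is_orth_proj H (fun y => F y = y) P.
Proof.
  intros hF hidem. destruct (Pol_adjoint F hF) as [F' [hadjF hcsF']].
  destruct (Pol_bound F hF) as [c [hc hbF]].
  eexists. exact (idempotent_orth_proj H T Tstar F F' c hadjF (Pol_cs F hF) hcsF' hc hbF hidem).
Qed.

End Polynomials.

Section Coprime.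
Variable H : HilbertSpace.
Variables T Tstar : op H.
Hypothesis hT : bounded_op H T.
Hypothesis hadj : is_adjoint H T Tstar.

Local Notation Pol := (Pol H T).

Definition coprime_pol (X Y : op H) : Prop :=
  exists U W, Pol U /\ Pol W /\ forall x, vadd (U (X x)) (W (Y x)) = x.

Lemma coprime_pol_sym X Y : coprime_pol X Y -> coprime_pol Y X.
Proof.
  intros [U [W [hU [hW E]]]]. exists W, U. split; [exact hW|]. split; [exact hU|].
  intro x. rewrite vadd_comm. apply E.
Qed.

Lemma coprime_pol_id_l Y : coprime_pol (op_id H) Y.
Proof.
  exists (op_id H), (op_scal H C0 (op_id H)).
  split; [apply pol_id|]. split; [apply pol_scal, pol_id|].
  intro x. unfold op_id, op_scal. now rewrite vscal_0, vadd_0.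
Qed.

(* From U X + W Y = 1 and U' X + W' Z = 1 we get
   (U + W Y U') X + (W W') (Y Z) = 1. *)
Lemma coprime_pol_mul_r X Y Z : Pol Y ->
  coprime_pol X Y -> coprime_pol X Z -> coprime_pol X (op_comp H Y Z).
Proof.
  intros hY [U [W [hU [hW E]]]] [U' [W' [hU' [hW' E']]]].
  exists (op_add H U (op_comp H W (op_comp H Y U'))), (op_comp H W W').
  split; [apply pol_add, pol_comp, pol_comp; auto|]. split; [now apply pol_comp|].
  intro x. unfold op_add, op_comp.
  rewrite (Pol_comm H T Tstar hT hadj W' Y _ hW' hY).
  destruct (Pol_linear H T Tstar hadj W hW) as [hWa _].
  destruct (Pol_linear H T Tstar hadj Y hY) as [hYa _].
  now rewrite <- vadd_assoc, <- hWa, <- hYa, E'.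
Qed.

Lemma coprime_pol_mul_l X Y Z : Pol Y ->
  coprime_pol Y X -> coprime_pol Z X -> coprime_pol (op_comp H Y Z) X.
Proof. intros. now apply coprime_pol_sym, coprime_pol_mul_r; try apply coprime_pol_sym. Qed.

Lemma coprime_pol_iter_r X Y n : Pol Y -> coprime_pol X Y ->
  coprime_pol X (Nat.iter n (op_comp H Y) (op_id H)).
Proof.
  intros hY hXY. induction n as [|n IH]; simpl.
  - apply coprime_pol_sym, coprime_pol_id_l.
  - now apply coprime_pol_mul_r.
Qed.

Lemma coprime_pol_iter_l X Y n : Pol Y -> coprime_pol Y X ->
  coprime_pol (Nat.iter n (op_comp H Y) (op_id H)) X.
Proof. intros. now apply coprime_pol_sym, coprime_pol_iter_r; try apply coprime_pol_sym. Qed.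

Definition lin_factor (a : Cx) : op H := fun x => vsub H (T x) (vscal a x).

Lemma Pol_lin_factor a : Pol (lin_factor a).
Proof.
  replace (lin_factor a) with (op_add H T (op_scal H (Cmul mone a) (op_id H))).
  - apply pol_add; [apply pol_T | apply pol_scal, pol_id].
  - apply functional_extensionality. intro x. unfold lin_factor, op_add, op_scal, op_id.
    now rewrite vsub_scal, vscal_mul.
Qed.

(* (b - a)^-1 (T - a) - (b - a)^-1 (T - b) = 1 *)
Lemma coprime_lin_factor a b : a <> b -> coprime_pol (lin_factor a) (lin_factor b).
Proof.
  intro hab. set (c := Cinv (Csub b a)).
  assert (hc : Cmul c (Csub b a) = C1) by (apply Cinv_l, Csub_neq0; auto).
  exists (op_scal H c (op_id H)), (op_scal H (Copp c) (op_id H)).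
  split; [apply pol_scal, pol_id|]. split; [apply pol_scal, pol_id|].
  intro x. unfold lin_factor, op_scal, op_id.
  rewrite !vscal_sub, !vsub_scal, !vscal_mul, vadd_swap4, <- !vscal_addC.
  replace (Cadd c (Copp c)) with C0 by ring. rewrite vscal_0, vadd_0_l.
  replace (Cadd (Cmul (Cmul mone c) a) (Cmul (Cmul mone (Copp c)) b)) with C1.
  - apply vscal_1.
  - rewrite <- hc. unfold mone, Csub. ring.
Qed.

Lemma Pol_shift_pow a n : Pol (shift_pow H T a n).
Proof.
  induction n as [|n IH]; simpl; [apply pol_id|].
  apply pol_comp; [apply Pol_lin_factor | exact IH].
Qed.

Lemma coprime_shift_pow a b n l : a <> b ->
  coprime_pol (shift_pow H T a n) (shift_pow H T b l).
Proof.
  intro hab. apply coprime_pol_iter_l; [apply Pol_lin_factor|].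
  apply coprime_pol_iter_r; [apply Pol_lin_factor|].
  now apply coprime_lin_factor.
Qed.

Lemma Pol_Qprod t k m : Pol (Qprod H T t k m).
Proof.
  induction m as [|m IH]; simpl; [apply pol_id|].
  apply pol_comp; [apply Pol_shift_pow | exact IH].
Qed.

Lemma Qprod_split t k m d x :
  Qprod H T t k (m + d) x =
  Qprod H T (fun i => t (m + i)%nat) (fun i => k (m + i)%nat) d (Qprod H T t k m x).
Proof.
  induction d as [|d IH]; simpl.
  - now rewrite Nat.add_0_r.
  - rewrite Nat.add_succ_r. simpl. unfold op_comp. now rewrite IH.
Qed.

Variable N : nat.
Variables (t : nat -> Cx) (k : nat -> nat).
Hypothesis hdist : forall i j, (1 <= i <= N)%nat -> (1 <= j <= N)%nat -> i <> j -> t i <> t j.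

Lemma coprime_Qprod_factor m j : (m < j <= N)%nat ->
  coprime_pol (Qprod H T t k m) (shift_pow H T (t j) (k j)).
Proof.
  intro hj. induction m as [|m IH]; simpl; [apply coprime_pol_id_l|].
  apply coprime_pol_mul_l; [apply Pol_shift_pow | |].
  - apply coprime_shift_pow, hdist; lia.
  - apply IH. lia.
Qed.

Lemma coprime_Qprod_tail m d : (m + d <= N)%nat ->
  coprime_pol (Qprod H T t k m)
    (Qprod H T (fun i => t (m + i)%nat) (fun i => k (m + i)%nat) d).
Proof.
  induction d as [|d IH]; intro hd; simpl.
  - apply coprime_pol_sym, coprime_pol_id_l.
  - apply coprime_pol_mul_r; [apply Pol_shift_pow | |].
    + apply coprime_Qprod_factor. lia.
    + apply IH. lia.
Qed.

End Coprime.

Section KernelProjections.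
Variable H : HilbertSpace.
Variables T Tstar : op H.
Hypothesis hT : bounded_op H T.
Hypothesis hadj : is_adjoint H T Tstar.
Variables (t : nat -> Cx) (k : nat -> nat).

Lemma Rsp_sub_closed m x y :
  Rsp H T t k m x -> Rsp H T t k m y -> Rsp H T t k m (vsub H x y).
Proof.
  unfold Rsp. intros hx hy.
  rewrite (lin_sub H _ _ _ (Pol_linear H T Tstar hadj _ (Pol_Qprod H T t k m))), hx, hy.
  apply vsub_self.
Qed.

Lemma Rsp_mono m x : (1 <= m)%nat -> Rsp H T t k (m - 1) x -> Rsp H T t k m x.
Proof.
  unfold Rsp. intros hm hx. replace m with (S (m - 1)) by lia. simpl. unfold op_comp.
  rewrite hx. apply lin_0, (Pol_linear H T Tstar hadj), Pol_shift_pow.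
Qed.

Variable N : nat.
Hypothesis hdist : forall i j, (1 <= i <= N)%nat -> (1 <= j <= N)%nat -> i <> j -> t i <> t j.
Hypothesis hann : forall x, Qprod H T t k N x = vzero.

(* Write
   Q_N = Q' Q_m; since Q_m and Q' are coprime, U Q_m + W Q' = 1, and
   F = W Q' is an idempotent polynomial in T whose range is exactly R_m. *)
Lemma Rsp_orth_proj m : (m <= N)%nat ->
  exists P, in_Cstar H T Tstar P /\ is_orth_proj H (Rsp H T t k m) P.
Proof.
  intro hm.
  destruct (coprime_Qprod_tail H T Tstar hT hadj N t k hdist m (N - m) ltac:(lia))
    as [U [W [hU [hW E]]]].
  set (Q' := Qprod H T (fun i => t (m + i)%nat) (fun i => k (m + i)%nat) (N - m)).
  set (F := op_comp H W Q').
  assert (hQ' : Pol H T Q') by apply Pol_Qprod.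
  assert (hQm : Pol H T (Qprod H T t k m)) by apply Pol_Qprod.
  assert (hF : Pol H T F) by now apply pol_comp.
  assert (F_range : forall z, Rsp H T t k m (F z)).
  { intro z. unfold Rsp, F, op_comp.
    rewrite (Pol_comm H T Tstar hT hadj _ W _ hQm hW), (Pol_comm H T Tstar hT hadj _ Q' _ hQm hQ').
    unfold Q'. rewrite <- Qprod_split. replace (m + (N - m))%nat with N by lia.
    rewrite hann. apply lin_0, (Pol_linear H T Tstar hadj), hW. }
  assert (F_fix : forall y, Rsp H T t k m y -> F y = y).
  { intros y hy. rewrite <- (E y) at 2. unfold Rsp in hy.
    rewrite hy, (lin_0 H U (Pol_linear H T Tstar hadj U hU)), vadd_0_l. reflexivity. }
  destruct (Pol_idempotent_orth_proj H T Tstar hT hadj F hF (fun x => F_fix _ (F_range x)))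
    as [P [hPcs hP]].
  exists P. split; [exact hPcs|]. apply (orth_proj_ext H (fun y => F y = y)); [|exact hP].
  intro y. split; [intro hy; rewrite <- hy; apply F_range | apply F_fix].
Qed.

End KernelProjections.

Theorem mainTheorem5 (H : HilbertSpace) (T Tstar : op H)
  (N : nat) (t : nat -> Cx) (k : nat -> nat)
  (hT : bounded_op H T) (hadj : is_adjoint H T Tstar)
  (hdist : forall i j, (1 <= i <= N)%nat -> (1 <= j <= N)%nat -> i <> j -> t i <> t j)
  (hk : forall i, (1 <= i <= N)%nat -> (1 <= k i)%nat)
  (hann : forall x, Qprod H T t k N x = vzero) :
  forall m, (1 <= m <= N)%nat ->
    exists P, is_orth_proj H (Lsp H T t k m) P /\ in_Cstar H T Tstar P.
Proof.
  intros m hm.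
  destruct (Rsp_orth_proj H T Tstar hT hadj t k N hdist hann m ltac:(lia)) as [P1 [hcs1 hP1]].
  destruct (Rsp_orth_proj H T Tstar hT hadj t k N hdist hann (m - 1) ltac:(lia))
    as [P0 [hcs0 hP0]].
  exists (op_sub H P1 P0). split; [|now apply cs_sub].
  apply orth_proj_diff; auto.
  - apply (Rsp_sub_closed H T Tstar hadj).
  - intro x. apply (Rsp_mono H T Tstar hadj). lia.
Qed.
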